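(* Define in $\mathcal{S}$ the polynomials $A_1=x_3$, $A_2=x_4$, $A_3=x_1^2+x_2^2$, $A_4=x_1x_5+x_2x_6$, $A_5=x_1x_6-x_2x_5$, $A_6=x_5^2+x_6^2$. Each $A_j$ Poisson-commutes with $x_3$, and they span (as generators) a Poisson subalgebra whose only nonzero brackets among generators (up to antisymmetry) are $\{A_2,A_3\}=-2A_3$, $\{A_2,A_6\}=2A_6$, $\{A_3,A_4\}=4A_2A_3$, $\{A_3,A_5\}=4A_1A_3$, $\{A_3,A_6\}=8(A_2A_4+A_1A_5)$, $\{A_4,A_6\}=4A_2A_6$, $\{A_5,A_6\}=4A_1A_6$. Moreover $A_1$, $A_4-A_2^2$ and $A_5-2A_1A_2$ Poisson-commute with every $A_j$.
   Context: $\mathcal{S}=\mathbb{R}[x_1,\dots,x_6]$ is the Lie–Poisson algebra of $\mathfrak{c}(2)$: its bracket is determined by the Leibniz rule and the nonzero brackets ($i<j$) $\{x_1,x_3\}=-x_2$, $\{x_1,x_4\}=x_1$, $\{x_1,x_5\}=2x_4$, $\{x_1,x_6\}=2x_3$, $\{x_2,x_3\}=x_1$, $\{x_2,x_4\}=x_2$, $\{x_2,x_5\}=-2x_3$, $\{x_2,x_6\}=2x_4$, $\{x_3,x_5\}=x_6$, $\{x_3,x_6\}=-x_5$, $\{x_4,x_5\}=x_5$, $\{x_4,x_6\}=x_6$. *)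

From HB Require Import structures.
From mathcomp Require Import all_boot all_order all_algebra.
From mathcomp Require Import mpoly.
From Stdlib Require Import Rdefinitions.
From mathcomp Require Import Rstruct.
Set Implicit Arguments. Unset Strict Implicit. Unset Printing Implicit Defensive.
Import Order.TTheory GRing.Theory Num.Theory.
Local Open Scope ring_scope.

Notation S := {mpoly R[6]}.

(* x k = the variable x_k, for k = 1..6 (index k-1 in 'I_6). *)
Definition x (k : nat) : S := 'X_(@inord 5 k.-1).

(* Structure constants {x_a, x_b} for a < b (1-based), as in the context. *)
Definition cstr (a b : nat) : S :=
  match a, b with
  | 1, 3 => - x 2
  | 1, 4 => x 1
  | 1, 5 => 2%:R * x 4
  | 1, 6 => 2%:R * x 3
  | 2, 3 => x 1
  | 2, 4 => x 2
  | 2, 5 => - (2%:R * x 3)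
  | 2, 6 => 2%:R * x 4
  | 3, 5 => x 6
  | 3, 6 => - x 5
  | 4, 5 => x 5
  | 4, 6 => x 6
  | _, _ => 0
  end.

Definition bra (i j : 'I_6) : S :=
  if ltn i j then cstr i.+1 j.+1
  else if ltn j i then - cstr j.+1 i.+1 else 0.

(* The Lie–Poisson bracket: the unique biderivation extending bra,
   {f, g} = sum_{i,j} (d f / d x_i) (d g / d x_j) {x_i, x_j}. *)
Definition pb (f g : S) : S :=
  \sum_(i < 6) \sum_(j < 6) (mderiv i f * mderiv j g) * bra i j.

Definition A (k : nat) : S :=
  match k with
  | 1 => x 3
  | 2 => x 4
  | 3 => x 1 ^+ 2 + x 2 ^+ 2
  | 4 => x 1 * x 5 + x 2 * x 6
  | 5 => x 1 * x 6 - x 2 * x 5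
  | 6 => x 5 ^+ 2 + x 6 ^+ 2
  | _ => 0
  end.

Definition Atab (j k : nat) : S :=
  match j, k with
  | 2, 3 => - (2%:R * A 3)
  | 2, 6 => 2%:R * A 6
  | 3, 4 => 4%:R * (A 2 * A 3)
  | 3, 5 => 4%:R * (A 1 * A 3)
  | 3, 6 => 8%:R * (A 2 * A 4 + A 1 * A 5)
  | 4, 6 => 4%:R * (A 2 * A 6)
  | 5, 6 => 4%:R * (A 1 * A 6)
  | _, _ => 0
  end.

(* The bracket pb of Defs is the biderivation of S = R[x_1, ..., x_6]
   determined by its values bra on pairs of coordinate functions:
     {f, g} = sum_(i,j) (d f / d x_i) (d g / d x_j) {x_i, x_j}.
   Since pb is this biderivation for the table bra, these rules reduce any
   bracket of polynomials in the x_k to a polynomial expression in the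
   structure constants of c(2), which is then normalized by the ring tactic. *)

From Pilot Require Import Defs.
From HB Require Import structures.
From mathcomp Require Import all_boot all_order all_algebra.
From mathcomp Require Import mpoly.
From Stdlib Require Import Rdefinitions.
From mathcomp Require Import Rstruct.
From mathcomp Require Import ring.
Set Implicit Arguments. Unset Strict Implicit. Unset Printing Implicit Defensive.
Import GRing.Theory.
Local Open Scope ring_scope.

Section Biderivation.
Variables (n : nat) (R : comNzRingType).

Lemma mderiv_nat (i : 'I_n) (k : nat) : mderiv i (k%:R : {mpoly R[n]}) = 0.
Proof. by rewrite mderivMn -mpolyC1 mderivC mul0rn. Qed.

Lemma mderiv_var (i p : 'I_n) : mderiv i ('X_p : {mpoly R[n]}) = (p == i)%:R.
Proof.
rewrite mderivX mnm1E; case: eqP => [->|_]; last by rewrite scale0r.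
have -> : (U_(i) - U_(i) = 0)%MM by apply/mnmP => k; rewrite !mnmE subnn.
by rewrite scale1r mpolyX0.
Qed.

Variable b : 'I_n -> 'I_n -> {mpoly R[n]}.

Definition bideriv (f g : {mpoly R[n]}) : {mpoly R[n]} :=
  \sum_(i < n) \sum_(j < n) (mderiv i f * mderiv j g) * b i j.

Lemma biderivDl f g h : bideriv (f + g) h = bideriv f h + bideriv g h.
Proof.
rewrite /bideriv -big_split; apply: eq_bigr => i _.
by rewrite -big_split; apply: eq_bigr => j _; rewrite mderivD !mulrDl.
Qed.

Lemma biderivDr f g h : bideriv h (f + g) = bideriv h f + bideriv h g.
Proof.
rewrite /bideriv -big_split; apply: eq_bigr => i _.
by rewrite -big_split; apply: eq_bigr => j _; rewrite mderivD mulrDr !mulrDl.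
Qed.

Lemma biderivNl f h : bideriv (- f) h = - bideriv f h.
Proof.
rewrite /bideriv -sumrN; apply: eq_bigr => i _.
by rewrite -sumrN; apply: eq_bigr => j _; rewrite mderivN !mulNr.
Qed.

Lemma biderivNr f h : bideriv h (- f) = - bideriv h f.
Proof.
rewrite /bideriv -sumrN; apply: eq_bigr => i _.
by rewrite -sumrN; apply: eq_bigr => j _; rewrite mderivN mulrN !mulNr.
Qed.

Lemma biderivMl f g h : bideriv (f * g) h = f * bideriv g h + g * bideriv f h.
Proof.
rewrite /bideriv !mulr_sumr -big_split; apply: eq_bigr => i _.
by rewrite !mulr_sumr -big_split; apply: eq_bigr => j _; rewrite mderivM /=; ring.
Qed.

Lemma biderivMr f g h : bideriv h (f * g) = f * bideriv h g + g * bideriv h f.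
Proof.
rewrite /bideriv !mulr_sumr -big_split; apply: eq_bigr => i _.
by rewrite !mulr_sumr -big_split; apply: eq_bigr => j _; rewrite mderivM /=; ring.
Qed.

Lemma biderivnl k h : bideriv k%:R h = 0.
Proof.
by rewrite /bideriv big1 // => i _; rewrite big1 // => j _; rewrite mderiv_nat !mul0r.
Qed.

Lemma biderivnr k h : bideriv h k%:R = 0.
Proof.
by rewrite /bideriv big1 // => i _; rewrite big1 // => j _; rewrite mderiv_nat mulr0 mul0r.
Qed.

Lemma biderivXX (p q : 'I_n) : bideriv 'X_p 'X_q = b p q.
Proof.
rewrite /bideriv (bigD1 p) //= [X in _ + X]big1 => [|i /negbTE ip]; last first.
  by rewrite big1 // => j _; rewrite mderiv_var eq_sym ip !mul0r.
rewrite addr0 (bigD1 q) //= [X in _ + X]big1 => [|j /negbTE jq]; last first.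
  by rewrite [mderiv j _]mderiv_var eq_sym jq mulr0 mul0r.
by rewrite !mderiv_var !eqxx mulr1 mul1r addr0.
Qed.

End Biderivation.

Lemma pbE f g : pb f g = bideriv bra f g.
Proof. by []. Qed.

(* Constants are handled first, before 2%:R could be unfolded to 1 + 1. *)
Ltac expand_pb :=
  rewrite !pbE ?expr2
    ?(biderivnl, biderivnr, biderivDl, biderivDr, biderivNl, biderivNr,
      biderivMl, biderivMr, biderivXX) /bra ?inordK //=.

Lemma A_commute_x3 (j : nat) : leq 1 j && leq j 6 -> pb (A j) (x 3) = 0.
Proof. by case: j => [|[|[|[|[|[|[|j]]]]]]] //= _; rewrite /A; expand_pb; ring. Qed.

Lemma A_bracket_table (j k : nat) :
  leq 1 j -> ltn j k -> leq k 6 -> pb (A j) (A k) = Atab j k.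
Proof.
case: j => [|[|[|[|[|[|[|j]]]]]]]; case: k => [|[|[|[|[|[|[|k]]]]]]] //= _ _ _;
  by rewrite /Atab /A; expand_pb; ring.
Qed.

Lemma A_casimirs (j : nat) : leq 1 j && leq j 6 ->
  [/\ pb (A 1) (A j) = 0, pb (A 4 - A 2 ^+ 2) (A j) = 0
    & pb (A 5 - 2%:R * A 1 * A 2) (A j) = 0].
Proof.
by case: j => [|[|[|[|[|[|[|j]]]]]]] //= _; rewrite /A; split; expand_pb; ring.
Qed.

Theorem mainTheorem9 :
  (forall j : nat, leq 1 j && leq j 6 -> pb (A j) (x 3) = 0) /\
  (forall j k : nat, leq 1 j -> ltn j k -> leq k 6 ->
     pb (A j) (A k) = Atab j k) /\
  (forall j : nat, leq 1 j && leq j 6 ->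
     [/\ pb (A 1) (A j) = 0,
         pb (A 4 - A 2 ^+ 2) (A j) = 0
       & pb (A 5 - 2%:R * A 1 * A 2) (A j) = 0]).
Proof.
by split; [exact: A_commute_x3 | split; [exact: A_bracket_table | exact: A_casimirs]].
Qed.
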